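(* Let $\mathbf{x}$ be a parking function of length $n$. Then the mixed graph $P(\mathbf{x})$ produced by Algorithm A is a parking graph on $[n]$, and for each vertex $i$ the number of directed edges (up or down) of $P(\mathbf{x})$ pointing into $i$ equals $x_i-1$.
   Context: A parking function of length $n$ is a sequence of positive integers which, sorted increasingly as $x_{(1)}\le\dots\le x_{(n)}$, satisfies $x_{(k)}\le k$ for all $k$. A parking graph $P$ on $[n]$ is a mixed graph with vertex set $[n]$ in which every pair $\{j,k\}$ with $1\le j<k\le n$ is joined by exactly one edge: a down edge $j\leftarrow k$ (directed from $k$ to $j$), an up edge $j\rightarrow k$ (directed from $j$ to $k$), or a downish (undirected) edge $jk$; letting $\vec P$ be obtained by replacing each downish $jk$ ($j<k$) with $j\leftarrow k$, $P$ must satisfy: (i) $\vec P$ is acyclic, and (ii) for every triangle of $P$ having at least one down edge and at least one downish edge, the source (in-degree $0$ within the triangle in $\vec P$) and sink (out-degree $0$ within the triangle in $\vec P$) are not joined by a downish edge. Algorithm A: Input $\mathbf{x}$; start with vertex set $[n]$ and no edges; set $\mathbf{y}:=\mathbf{x}-(1,\dots,1)$. Repeat: (Up step) If some $y_k=0$: let $j:=\max\{k: y_k=0\}$; for every $k>j$ with $y_k>0$, introduce the up edge $j\rightarrow k$ and replace $y_k$ by $y_k-1$; replace every entry that was negative at the start of this step by that entry minus $1$; set $y_j:=-1$; repeat. (Down step) Else, if some $y_k>0$: among all indices $j$ such that there is $k<j$ with $y_k>0$ and the edge $k\leftarrow j$ not yet introduced, choose $j$ with minimal $y_j$; for every $k<j$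 with $y_k>0$, introduce the down edge $k\leftarrow j$ and replace $y_k$ by $y_k-1$; repeat. (Stop) Else (all $y_k<0$): join every pair not yet joined by a downish edge and stop. Output: the mixed graph $P(\mathbf{x})$. *)

From HB Require Import structures.
From mathcomp Require Import all_boot all_order all_algebra.
Set Implicit Arguments. Unset Strict Implicit. Unset Printing Implicit Defensive.
Import Order.TTheory GRing.Theory Num.Theory.

(* Vertices are the natural numbers 1..n (the set [n]); a sequence
   x = (x_1,...,x_n) is a  seq nat  of size n with  x_i = nth 0 x i.-1. *)

Definition xi (x : seq nat) (i : nat) : nat := nth 0 x i.-1.

Definition parking_function (x : seq nat) : Prop :=
  let s := sort leq x in
  all (fun v => 0 < v) x /\ forall k, k < size s -> nth 0 s k <= k.+1.

Inductive ekind := EDown | EUp | EDownish.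

Definition ekind_eqb (a b : ekind) : bool :=
  match a, b with
  | EDown, EDown | EUp, EUp | EDownish, EDownish => true
  | _, _ => false
  end.

Lemma ekind_eqP : Equality.axiom ekind_eqb.
Proof. by case; case; constructor. Qed.

HB.instance Definition _ := hasDecEq.Build ekind ekind_eqP.

(* An edge (c, j, k) always has j < k and joins j and k:
     (EDown, j, k)    is the down edge     j <- k  (directed from k to j),
     (EUp, j, k)      is the up edge       j -> k  (directed from j to k),
     (EDownish, j, k) is the downish (undirected) edge jk. *)
Definition edge := (ekind * nat * nat)%type.
Definition mgraph := seq edge.

Definition njoin (P : mgraph) (j k : nat) : nat :=
  count (fun e : edge => (e.1.2 == j) && (e.2 == k)) P.

Definition has_kind (P : mgraph) (c : ekind) (u v : nat) : bool :=
  (c, minn u v, maxn u v) \in P.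

(* arc u -> v of vec P (downish jk, j<k, replaced by j <- k) *)
Definition arc (P : mgraph) : rel nat := fun u v =>
  [|| (EUp, u, v) \in P, (EDown, v, u) \in P | (EDownish, v, u) \in P].

Definition parking_graph (n : nat) (P : mgraph) : Prop :=
  (forall e, e \in P -> 1 <= e.1.2 /\ e.1.2 < e.2 /\ e.2 <= n) /\
  (forall j k, 1 <= j -> j < k -> k <= n -> njoin P j k = 1) /\
  (forall (u : nat) (p : seq nat), path (arc P) u p -> last u p = u -> p = [::]) /\
  (forall a b c, arc P a b -> arc P b c -> arc P a c ->
     [|| has_kind P EDown a b, has_kind P EDown b c | has_kind P EDown a c] ->
     [|| has_kind P EDownish a b, has_kind P EDownish b c | has_kind P EDownish a c] ->
     ~~ has_kind P EDownish a c).

(* The state is (y, E) where y : nat -> int (only the values at 1..n matter)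
   and E is the list of edges introduced so far.  Since the down step may
   involve a choice (ties for the minimal y_j), the algorithm is modelled as
   a relation  algA_run n y E P : "from state (y,E), Algorithm A can stop with
   output P". *)

Local Open Scope ring_scope.

Definition in_n (n i : nat) : bool := (1 <= i)%N && (i <= n)%N.

Definition up_y (n : nat) (y : nat -> int) (j : nat) : nat -> int := fun k =>
  if k == j then -1
  else if ((j < k)%N && (0 < y k)) then y k - 1
  else if y k < 0 then y k - 1
  else y k.

Definition up_edges (n : nat) (y : nat -> int) (j : nat) : mgraph :=
  [seq (EUp, j, k) | k <- iota j.+1 (n - j) & 0 < y k].

Definition down_cand (y : nat -> int) (E : mgraph) (n j : nat) : bool :=
  in_n n j && has (fun k => (0 < y k) && ((EDown, k, j) \notin E)) (iota 1 j.-1).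

Definition down_y (y : nat -> int) (j : nat) : nat -> int := fun k =>
  if ((1 <= k)%N && (k < j)%N && (0 < y k)) then y k - 1 else y k.

Definition down_edges (y : nat -> int) (j : nat) : mgraph :=
  [seq (EDown, k, j) | k <- iota 1 j.-1 & 0 < y k].

Definition stop_edges (n : nat) (E : mgraph) : mgraph :=
  [seq (EDownish, p.1, p.2) |
     p <- [seq (j, k) | j <- iota 1 n, k <- iota 1 n] & (p.1 < p.2)%N && (njoin E p.1 p.2 == 0)%N].

Inductive algA_run (n : nat) : (nat -> int) -> mgraph -> mgraph -> Prop :=
  | A_up y E j P :
      in_n n j -> y j = 0 ->
      (forall k, in_n n k -> y k = 0 -> (k <= j)%N) ->
      algA_run n (up_y n y j) (E ++ up_edges n y j) P ->
      algA_run n y E P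
  | A_down y E j P :
      (forall k, in_n n k -> y k != 0) ->
      (exists2 k, in_n n k & 0 < y k) ->
      down_cand y E n j ->
      (forall j', down_cand y E n j' -> y j <= y j') ->
      algA_run n (down_y y j) (E ++ down_edges y j) P ->
      algA_run n y E P
  | A_stop y E :
      (forall k, in_n n k -> y k < 0) ->
      algA_run n y E (E ++ stop_edges n E).

Definition algA (x : seq nat) (P : mgraph) : Prop :=
  algA_run (size x) (fun i => (xi x i)%:Z - 1) [::] P.

Definition indeg (P : mgraph) (i : nat) : nat :=
  count (fun e : edge => ((e.1.1 == EDown) && (e.1.2 == i)) || ((e.1.1 == EUp) && (e.2 == i))) P.

(* Run Algorithm A while maintaining an invariant [alg_inv] of the state
   (y, E).  Processed vertices (those already chosen by an up step, y_c < 0)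
   are ordered by [y] in the order in which they were processed.  Every edge
   introduced so far points, in vec P, from an earlier processed vertex to a
   later one; every up edge j -> k with j < k and j processed before k is
   present; down edges obey two closure rules; and indeg_i + max(y_i, 0) =
   x_i - 1.  The parking condition forces each down step to select a processed
   vertex, which is what keeps the invariant alive, while the potential
   sum_{y_i >= 0} (y_i + 1) strictly decreases, so the run terminates.  At the
   stop every vertex is processed and every added downish edge also points from
   the earlier to the later vertex, so vec P is ordered by processing time,
   hence acyclic; the closure rules give the triangle condition, and the
   invariant gives indeg_i = x_i - 1. *)

From Pilot Require Import Defs.
From HB Require Import structures.
From mathcomp Require Import all_boot all_order all_algebra.
From mathcomp Require Import zify.
Import Order.TTheory GRing.Theory Num.Theory.
Set Implicit Arguments. Unset Strict Implicit.
Local Open Scope ring_scope.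

Lemma sub_in_count (T : eqType) (a b : pred T) (s : seq T) :
  {in s, subpred a b} -> (count a s <= count b s)%N.
Proof.
move=> ab; rewrite -(@eq_in_count _ (predI a b)) => [|v vs /=].
  by apply: sub_count => v /andP[].
by case av: (a v); rewrite //= (ab v vs av).
Qed.

Lemma count_uniq_le1 (T : eqType) (p : pred T) (s : seq T) :
  uniq s -> {in s &, forall u v, p u -> p v -> u = v} -> (count p s <= 1)%N.
Proof.
move=> us p_inj; rewrite -size_filter.
case fs: (filter p s) => [//|u t]; have := filter_uniq p us; rewrite fs /= => /andP[ut _].
case: t fs ut => // v t fs; rewrite inE negb_or => /andP[/eqP uv _]; exfalso; apply: uv.
have: u \in filter p s by rewrite fs mem_head.
have: v \in filter p s by rewrite fs !inE eqxx orbT.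
by rewrite !mem_filter => /andP[pv vs] /andP[pu us']; apply: p_inj.
Qed.

Lemma seq_argmin (T : eqType) d (U : orderType d) (f : T -> U) (s : seq T) :
  s != [::] -> exists2 j, j \in s & {in s, forall k, (f j <= f k)%O}.
Proof.
elim: s => // a [|b s] IH _.
  by exists a => [|k]; rewrite ?mem_head // inE => /eqP->.
have [j js jmin] := IH isT.
have [fja|faj] := leP (f j) (f a).
  by exists j => [|k]; rewrite inE ?js ?orbT // => /orP[/eqP->|/jmin].
exists a => [|k]; rewrite ?mem_head // inE => /orP[/eqP->//|/jmin].
exact/le_trans/ltW.
Qed.

Lemma mem_iota1 n i : (i \in iota 1 n) = in_n n i.
Proof. by rewrite mem_iota add1n ltnS. Qed.

Lemma mem_up_edges n y j c a b : ((c, a, b) \in up_edges n y j) =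
  [&& c == EUp, a == j, (j < b)%N, (b <= n)%N & 0 < y b].
Proof.
apply/mapP/and5P => [[k]|[/eqP-> /eqP-> jb bn yb]].
  by rewrite mem_filter mem_iota => /andP[yk kr] [-> -> ->]; split => //; lia.
by exists b; rewrite // mem_filter mem_iota yb /=; lia.
Qed.

Lemma mem_down_edges y j c a b : ((c, a, b) \in down_edges y j) =
  [&& c == EDown, b == j, (1 <= a)%N, (a < j)%N & 0 < y a].
Proof.
apply/mapP/and5P => [[k]|[/eqP-> /eqP-> a1 aj ya]].
  by rewrite mem_filter mem_iota => /andP[yk kr] [-> -> ->]; split => //; lia.
by exists a; rewrite // mem_filter mem_iota ya /=; lia.
Qed.

Lemma mem_stop_edges n E c a b : ((c, a, b) \in stop_edges n E) =
  [&& c == EDownish, (1 <= a)%N, (a < b)%N, (b <= n)%N & njoin E a b == 0%N].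
Proof.
apply/mapP/and5P => [[[u v]]|[/eqP-> a1 ab bn E0]].
  rewrite mem_filter /= => /andP[/andP[uv E0] /allpairsP[[u' v'] [/=]]].
  rewrite !mem_iota => ? ? [eu ev] [-> -> ->]; subst u v; split => //; lia.
exists (a, b) => //; rewrite mem_filter /= ab E0.
by apply/allpairsP; exists (a, b); rewrite !mem_iota; split => //=; lia.
Qed.

Lemma uniq_up_edges n y j : uniq (up_edges n y j).
Proof. by rewrite map_inj_uniq ?filter_uniq ?iota_uniq // => u v []. Qed.

Lemma uniq_down_edges y j : uniq (down_edges y j).
Proof. by rewrite map_inj_uniq ?filter_uniq ?iota_uniq // => u v []. Qed.

Lemma indeg_cat E1 E2 i : indeg (E1 ++ E2) i = (indeg E1 i + indeg E2 i)%N.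
Proof. exact: count_cat. Qed.

Lemma njoin_cat E1 E2 a b : njoin (E1 ++ E2) a b = (njoin E1 a b + njoin E2 a b)%N.
Proof. exact: count_cat. Qed.

Lemma njoin_gt0 E c a b : (c, a, b) \in E -> (0 < njoin E a b)%N.
Proof. by move=> e; rewrite -has_count; apply/hasP; exists (c, a, b); rewrite //= !eqxx. Qed.

Lemma indeg_up_edges n y j i :
  indeg (up_edges n y j) i = [&& (j < i)%N, (i <= n)%N & 0 < y i].
Proof.
rewrite /indeg /up_edges count_map (@eq_count _ _ (pred1 i)) //.
rewrite count_uniq_mem ?filter_uniq ?iota_uniq // mem_filter mem_iota.
by case: (0 < y i); rewrite ?andbF //=; lia.
Qed.

Lemma indeg_down_edges y j i :
  indeg (down_edges y j) i = [&& (1 <= i)%N, (i < j)%N & 0 < y i].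
Proof.
rewrite /indeg /down_edges count_map (@eq_count _ _ (pred1 i)); last by move=> k /=; rewrite orbF.
rewrite count_uniq_mem ?filter_uniq ?iota_uniq // mem_filter mem_iota.
by case: (0 < y i); rewrite ?andbF //=; lia.
Qed.

Lemma indeg_stop_edges n E i : indeg (stop_edges n E) i = 0%N.
Proof. by rewrite /indeg count_map (@eq_count _ _ pred0) ?count_pred0. Qed.

Lemma njoin_stop_edges n E a b : (1 <= a)%N -> (a < b)%N -> (b <= n)%N ->
  njoin (stop_edges n E) a b = (njoin E a b == 0%N).
Proof.
move=> a1 ab bn; rewrite /njoin /stop_edges count_map (@eq_count _ _ (pred1 (a, b))).
  rewrite count_uniq_mem; last first.
    by rewrite filter_uniq // allpairs_uniq ?iota_uniq // => -[? ?] [? ?].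
  have ab_pair : (a, b) \in [seq (j, k) | j <- iota 1 n, k <- iota 1 n].
    by apply/allpairsP; exists (a, b); rewrite !mem_iota; split => //=; lia.
  by rewrite mem_filter /= ab ab_pair andbT.
by move=> [u v]; rewrite /= xpair_eqE.
Qed.

(* Every up step after the one processing [c] lowers [y c] by one, so among
   processed vertices a smaller [y] means processed earlier. *)
Definition earlier (y : nat -> int) (c b : nat) : bool := (y c < 0) && (y c < y b).

Lemma up_y_self n y j : up_y n y j j = -1.
Proof. by rewrite /up_y eqxx. Qed.

Lemma up_y_neg n y j k : k != j -> y k < 0 -> up_y n y j k = y k - 1.
Proof. by move=> kj yk; rewrite /up_y (negbTE kj) yk; case: ifP => // /andP[_]; lia. Qed.

Lemma up_y_nneg n y j k : k != j -> 0 <= y k ->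
  up_y n y j k = if (j < k)%N && (0 < y k) then y k - 1 else y k.
Proof. by move=> kj yk; rewrite /up_y (negbTE kj); case: ifP => // _; case: ltP; lia. Qed.

Lemma up_y_lt0 n y j k : k != j -> (up_y n y j k < 0) = (y k < 0).
Proof.
move=> kj; case: (ltP (y k) 0) => yk; first by rewrite up_y_neg //; lia.
by rewrite up_y_nneg //; case: ifP => [/andP[_]|_]; lia.
Qed.

Lemma up_y_le n y j k : y j = 0 -> up_y n y j k <= y k.
Proof.
move=> yj; have [->|kj] := eqVneq k j; first by rewrite up_y_self yj.
case: (ltP (y k) 0) => yk; first by rewrite up_y_neg //; lia.
by rewrite up_y_nneg //; case: ifP; lia.
Qed.

Lemma earlier_up n y j c b : y j = 0 -> earlier y c b -> earlier (up_y n y j) c b.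
Proof.
rewrite /earlier => yj /andP[yc cb].
have cj : c != j by apply/eqP => cj; subst; lia.
rewrite up_y_neg //; have [->|bj] := eqVneq b j; first by rewrite up_y_self; lia.
case: (ltP (y b) 0) => yb; first by rewrite up_y_neg //; lia.
by rewrite up_y_nneg //; case: ifP => _; lia.
Qed.

Lemma earlier_up_inv n y j c b : y j = 0 -> c != j ->
  earlier (up_y n y j) c b -> earlier y c b.
Proof.
rewrite /earlier => yj cj; case: (ltP (y c) 0) => yc; last first.
  by rewrite up_y_nneg //; case: ifP => [/andP[_]|_]; lia.
rewrite up_y_neg // => /andP[_ cb]; rewrite andTb.
have [bj|bj] := eqVneq b j; first by subst; lia.
by case: (ltP (y b) 0) => yb; [move: cb; rewrite up_y_neg //|]; lia.
Qed.

Lemma earlier_up_self n y j b : y j = 0 ->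
  earlier (up_y n y j) j b = (b != j) && (0 <= y b).
Proof.
rewrite /earlier up_y_self => yj /=; have [->|bj] := eqVneq b j; first by rewrite up_y_self.
case: (ltP (y b) 0) => yb; first by rewrite up_y_neg //; lia.
by rewrite up_y_nneg //; case: ifP => [/andP[_]|_]; lia.
Qed.

Lemma down_y_le y j k : down_y y j k <= y k.
Proof. by rewrite /down_y; case: ifP => [/andP[_]|_]; lia. Qed.

Lemma down_y_neg y j k : y k < 0 -> down_y y j k = y k.
Proof. by rewrite /down_y; case: ifP => [/andP[_]|_]; lia. Qed.

Lemma down_y_lt0 y j k : (down_y y j k < 0) = (y k < 0).
Proof. by rewrite /down_y; case: ifP => [/andP[_]|_]; lia. Qed.

Lemma earlier_down y j c b : earlier (down_y y j) c b = earlier y c b.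
Proof.
rewrite /earlier /down_y.
by case: ifP => [/andP[_]|_]; case: ifP => [/andP[_]|_]; lia.
Qed.

Lemma map_xi x : [seq xi x i | i <- iota 1 (size x)] = x.
Proof.
rewrite -[RHS](mkseq_nth 0%N) /mkseq -[1%N]addn0 iotaDl -map_comp.
by apply: eq_map => k; rewrite /xi /= add0n.
Qed.

Lemma parking_function_count x m : parking_function x -> (m <= size x)%N ->
  (m <= count (fun i => xi x i <= m)%N (iota 1 (size x)))%N.
Proof.
move=> [_ park] m_le; rewrite -(count_map (xi x) (fun v => v <= m)%N) map_xi.
have /permP <- : perm_eq (sort leq x) x by rewrite perm_sort.
rewrite -(cat_take_drop m (sort leq x)) count_cat; apply: leq_trans (leq_addr _ _).
have size_m : size (take m (sort leq x)) = m.
  by rewrite size_take size_sort; case: ltnP; lia.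
have /eqP -> : count (fun v => v <= m)%N (take m (sort leq x)) == m.
  rewrite -[X in _ == X]size_m -all_count; apply/(all_nthP 0%N) => k; rewrite size_m => km.
  by rewrite nth_take //; have := park k; rewrite size_sort => /(_ ltac:(lia)); lia.
by [].
Qed.

Definition weight (v : int) : nat := if v < 0 then 0 else (absz v).+1.

Definition potential n (y : nat -> int) : nat := (\sum_(k <- iota 1 n) weight (y k))%N.

Lemma weight_le v w : v <= w -> (weight v <= weight w)%N.
Proof. by rewrite /weight; case: (ltP v 0); case: (ltP w 0); lia. Qed.

Lemma weight_lt v w : v < w -> 0 <= w -> (weight v < weight w)%N.
Proof. by rewrite /weight; case: (ltP v 0); case: (ltP w 0); lia. Qed.

Lemma potential_lt n y y' j : in_n n j -> (forall k, y' k <= y k) ->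
  y' j < y j -> 0 <= y j -> (potential n y' < potential n y)%N.
Proof.
move=> jn le_y' lt_y' yj; rewrite /potential !(bigD1_seq j) ?mem_iota1 ?iota_uniq //=.
by rewrite -addSn leq_add ?weight_lt // leq_sum // => k _; apply: weight_le.
Qed.

Lemma potential_up n y j : in_n n j -> y j = 0 -> (potential n (up_y n y j) < potential n y)%N.
Proof. by move=> jn yj; apply: potential_lt jn _ _ _ => [k||]; rewrite ?up_y_le ?up_y_self ?yj. Qed.

Lemma potential_down n y E j : down_cand y E n j -> (potential n (down_y y j) < potential n y)%N.
Proof.
case/andP=> /andP[j1 jn] /hasP[k]; rewrite mem_iota => kj /andP[yk _].
apply: (@potential_lt _ _ _ k); last exact: ltW.
- by apply/andP; split; lia.
- by move=> i; apply: down_y_le.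
- by rewrite /down_y yk andbT; case: ifP => [_|/negP[]]; lia.
Qed.

Section Invariant.

Variables (n : nat) (x : seq nat).
Hypotheses (x_park : parking_function x) (size_x : size x = n).

Record alg_inv (y : nat -> int) (E : mgraph) : Prop := {
  inv_edge : forall c a b, (c, a, b) \in E -> [/\ (1 <= a)%N, (a < b)%N, (b <= n)%N &
    ((c == EUp) && earlier y a b) || ((c == EDown) && earlier y b a)];
  inv_up_complete : forall j k, in_n n j -> in_n n k -> (j < k)%N -> earlier y j k ->
    (EUp, j, k) \in E;
  inv_down_nonearlier : forall a b c, (EDown, b, a) \in E -> in_n n c -> (c < a)%N ->
    ~~ earlier y c b -> (EDown, c, a) \in E;
  inv_down_earlier : forall a b c, (EDown, c, b) \in E -> in_n n a -> earlier y a b ->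
    (c < a)%N -> (EDown, c, a) \in E;
  inv_time_inj : forall i k, in_n n i -> in_n n k -> i != k -> y i < 0 -> y k < 0 ->
    y i != y k;
  inv_uniq : uniq E;
  inv_indeg : forall i, in_n n i -> if 0 <= y i then (indeg E i)%:Z + y i = (xi x i)%:Z - 1
                                   else (indeg E i)%:Z = (xi x i)%:Z - 1 }.

Lemma xi_pos i : in_n n i -> (0 < xi x i)%N.
Proof. by case: x_park => /(all_nthP 0%N) x_pos _ /andP[i1 iN]; apply: x_pos; lia. Qed.

Lemma alg_inv_init : alg_inv (fun i => (xi x i)%:Z - 1) [::].
Proof.
split => // [j k jn _ _ /andP[]|i k iN _ _ yi _|i iN].
- by have := xi_pos jn; lia.
- by have := xi_pos iN; lia.
- by have := xi_pos iN; rewrite /indeg /=; case: ifP; lia.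
Qed.

Lemma alg_inv_up y E j : alg_inv y E -> in_n n j -> y j = 0 ->
  (forall k, in_n n k -> y k = 0 -> (k <= j)%N) ->
  alg_inv (up_y n y j) (E ++ up_edges n y j).
Proof.
move=> I jn yj jmax; have /andP[j1 jle] := jn.
split.
- move=> c a b; rewrite mem_cat => /orP[/(inv_edge I)[a1 ab bn]|].
    by case/orP=> /andP[/eqP-> /(earlier_up n yj) e]; split; rewrite // e ?orbT.
  rewrite mem_up_edges => /and5P[/eqP-> /eqP-> jb bn yb]; split => //.
  by rewrite earlier_up_self //= orbF; lia.
- move=> j0 k j0n kn jk; have [ej|ne] := eqVneq j0 j; last first.
    by move=> /(earlier_up_inv yj ne) ejk; rewrite mem_cat (inv_up_complete I).
  subst j0; rewrite earlier_up_self // => /andP[_ yk].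
  have : y k <> 0 by move=> yk0; have := jmax k kn yk0; lia.
  by rewrite mem_cat mem_up_edges !eqxx jk (andP kn).2 orbC /=; lia.
- move=> a b c; rewrite mem_cat mem_up_edges /= orbF => eE cn ca ncb.
  by rewrite mem_cat (inv_down_nonearlier I eE) //; apply: contra ncb; apply: earlier_up.
- move=> a b c; rewrite mem_cat mem_up_edges /= orbF => eE an ab ca.
  have [aj|ne] := eqVneq a j; last first.
    by rewrite mem_cat (inv_down_earlier I eE) // (earlier_up_inv yj ne ab).
  subst a; move: ab; rewrite earlier_up_self // => /andP[_ yb].
  by case: (inv_edge I eE) => _ _ _ /orP[] /andP[] // _ /andP[]; lia.
- move=> i k iN kN ik.
  have [ei|ij] := eqVneq i j; have [ek|kj] := eqVneq k j.
  + by subst; rewrite eqxx in ik.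
  + by subst i; rewrite up_y_self up_y_lt0 // => _ yk; rewrite up_y_neg //; lia.
  + by subst k; rewrite up_y_self up_y_lt0 // => yi _; rewrite up_y_neg //; lia.
  + rewrite !up_y_lt0 // => yi yk; rewrite !up_y_neg //.
    by have := inv_time_inj I iN kN ik yi yk; lia.
- rewrite cat_uniq (inv_uniq I) uniq_up_edges andbT; apply/hasPn => -[[c a] b].
  rewrite mem_up_edges => /and5P[/eqP-> /eqP-> _ _ _]; apply/negP => /(inv_edge I).
  by case=> _ _ _ /orP[] /andP[] // _ /andP[]; lia.
- move=> i iN; have := inv_indeg I iN; rewrite indeg_cat indeg_up_edges (andP iN).2.
  have [->|ij] := eqVneq i j; first by rewrite yj up_y_self ltnn /=; lia.
  case: (ltP (y i) 0) => yi; first by rewrite up_y_neg //; case: ifP; lia.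
  rewrite up_y_nneg //; case: (ltnP j i) => ?; case: (ltP 0 (y i)) => ? /=;
    (repeat case: ifP => ?); lia.
Qed.

Lemma alg_inv_down y E j : alg_inv y E -> (forall k, in_n n k -> y k != 0) ->
  down_cand y E n j -> (forall j', down_cand y E n j' -> y j <= y j') -> y j < 0 ->
  alg_inv (down_y y j) (E ++ down_edges y j).
Proof.
move=> I nz cand jmin yj; have /andP[jn /hasP[k0 k0i /andP[yk0 k0E]]] := cand.
move: k0i; rewrite mem_iota => k0i.
have no_down_to_j b : (EDown, b, j) \notin E.
  apply: contra k0E => /(inv_down_nonearlier I) -> //.
  - by move: jn => /andP[? ?]; apply/andP; split; lia.
  - by lia.
  - by rewrite /earlier negb_and; lia.
split.
- move=> c a b; rewrite mem_cat !earlier_down => /orP[eE|]; first exact: (inv_edge I eE).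
  rewrite mem_down_edges => /and5P[/eqP-> /eqP-> a1 aj ya].
  by split; rewrite ?(andP jn).2 //= /earlier yj /=; lia.
- by move=> j0 k j0n kn jk; rewrite earlier_down mem_cat => /(inv_up_complete I) ->.
- move=> a b c; rewrite mem_cat earlier_down => /orP[eE|eD] cn ca ncb.
    by rewrite mem_cat (inv_down_nonearlier I eE).
  move: eD; rewrite mem_down_edges => /and5P[_ /eqP ea b1 bj yb]; subst a.
  have yc : 0 < y c by have := nz c cn; move: ncb; rewrite /earlier negb_and; lia.
  by rewrite mem_cat mem_down_edges !eqxx /= ca yc (andP cn).1 orbT.
- move=> a b c; rewrite mem_cat earlier_down => /orP[eE|eD] an ab ca.
    by rewrite mem_cat (inv_down_earlier I eE).
  move: eD; rewrite mem_down_edges => /and5P[_ /eqP eb c1 cj yc]; subst b.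
  rewrite mem_cat; apply/orP; left; apply: contraT => caE.
  have : down_cand y E n a.
    by rewrite /down_cand an; apply/hasP; exists c; rewrite ?mem_iota ?yc //=; lia.
  by move/jmin; move: ab => /andP[_]; lia.
- move=> i k iN kN ik; rewrite !down_y_lt0 => yi yk; rewrite !down_y_neg //.
  exact: (inv_time_inj I).
- rewrite cat_uniq (inv_uniq I) uniq_down_edges andbT; apply/hasPn => -[[c a] b].
  by rewrite mem_down_edges => /and5P[/eqP-> /eqP-> _ _ _].
- move=> i iN; have := inv_indeg I iN; rewrite indeg_cat indeg_down_edges /down_y.
  by case: (ltnP 0 i) => ?; case: (ltnP i j) => ?; case: (ltP 0 (y i)) => ? /=;
    (repeat case: ifP => ?); lia.
Qed.

Lemma indeg_ge_processed y E k : alg_inv y E ->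
  (forall j k, in_n n j -> y j < 0 -> (1 <= k < j)%N -> 0 < y k -> (EDown, k, j) \in E) ->
  in_n n k -> 0 < y k -> (count (fun j => (y j < 0)%R) (iota 1 n) <= indeg E k)%N.
Proof.
move=> I down_all kn yk; have /andP[k1 kn'] := kn.
pose into_k j := if (j < k)%N then (EUp, j, k) else (EDown, k, j).
rewrite -size_filter -(size_map into_k) /indeg -size_filter; apply: uniq_leq_size.
  rewrite map_inj_in_uniq ?filter_uniq ?iota_uniq // => j1 j2 _ _.
  by rewrite /into_k; do 2 case: ifP => _; case.
move=> e /mapP[j]; rewrite mem_filter mem_iota1 => /andP[yj jn] ->.
have kj : k != j by apply/eqP => kj; subst; lia.
rewrite mem_filter /into_k; case: ltnP => jk /=.
  by rewrite eqxx (inv_up_complete I) // /earlier yj; lia.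
by rewrite eqxx down_all //; lia.
Qed.

(* If no processed vertex were a down candidate, every positive vertex would
   receive an edge from each of the d processed vertices, forcing x_i > d + 1;
   so only processed vertices could have x_i <= d + 1, whereas the parking
   condition gives at least d + 1 of them. *)
Lemma down_step_from_processed y E : alg_inv y E -> (forall k, in_n n k -> y k != 0) ->
  (exists2 k, in_n n k & 0 < y k) -> exists2 j, down_cand y E n j & y j < 0.
Proof.
move=> I nz [k0 k0n yk0].
have [/hasP[j _ /andP[cj yj]]|none] :=
  boolP (has (fun j => down_cand y E n j && (y j < 0)) (iota 1 n)); first by exists j.
exfalso.
have down_all j k : in_n n j -> y j < 0 -> (1 <= k < j)%N -> 0 < y k -> (EDown, k, j) \in E.
  move=> jn yj kj yk; apply: contraNT none => kjE; apply/hasP; exists j; rewrite ?mem_iota1 //.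
  by rewrite /down_cand jn yj andbT; apply/hasP; exists k; rewrite ?mem_iota ?yk ?kjE //; lia.
set d := count (fun j => y j < 0) (iota 1 n).
have d_lt_n : (d < n)%N.
  have := count_predC (fun j => y j < 0) (iota 1 n); rewrite size_iota.
  have : (0 < count (predC (fun j => (y j < 0)%R)) (iota 1 n))%N.
    by rewrite -has_count; apply/hasP; exists k0; rewrite ?mem_iota1 //= -leNgt ltW.
  by rewrite /d; lia.
have := @parking_function_count x d.+1 x_park; rewrite size_x => /(_ d_lt_n).
suff : (count (fun i => xi x i <= d.+1)%N (iota 1 n) <= d)%N by lia.
apply: leq_trans (sub_in_count (b := fun j => y j < 0) _) _ => // i.
rewrite mem_iota1 => iN xid; case: (ltP (y i) 0) => // yi.
have ypos : 0 < y i by have := nz i iN; lia.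
have := indeg_ge_processed I down_all iN ypos; have := inv_indeg I iN.
by rewrite yi; lia.
Qed.

Lemma alg_run_exists m y E : (potential n y < m)%N -> alg_inv y E ->
  exists P, algA_run n y E P.
Proof.
elim: m y E => // m IH y E pot I.
have [/hasP[j0 j0n /eqP yj0]|nz] := boolP (has (fun k => y k == 0) (iota 1 n)).
  have zero_ex : exists j, in_n n j && (y j == 0) by exists j0; rewrite -mem_iota1 j0n yj0.
  have zero_le_n j : in_n n j && (y j == 0) -> (j <= n)%N by case/andP=> /andP[].
  have [j /andP[jn /eqP yj] jmax] := ex_maxnP zero_ex zero_le_n.
  have jmax' k : in_n n k -> y k = 0 -> (k <= j)%N by move=> kn yk; rewrite jmax ?kn ?yk.
  have [P run] := IH _ _ (leq_trans (potential_up jn yj) pot) (alg_inv_up I jn yj jmax').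
  by exists P; apply: A_up run.
have {}nz k : in_n n k -> y k != 0 by rewrite -mem_iota1 => kn; apply: (hasPn nz).
have [/hasP[k0 k0n yk0]|npos] := boolP (has (fun k => 0 < y k) (iota 1 n)); last first.
  exists (E ++ stop_edges n E); apply: A_stop => k kn.
  by have := nz k kn; have := hasPn npos k; rewrite mem_iota1 => /(_ kn); lia.
rewrite mem_iota1 in k0n; have pos : exists2 k, in_n n k & 0 < y k by exists k0.
have [j0 cj0 yj0] := down_step_from_processed I nz pos.
have cands : filter (down_cand y E n) (iota 1 n) != [::].
  by rewrite -has_filter; apply/hasP; exists j0; rewrite ?mem_iota1 ?(andP cj0).1.
have [j] := seq_argmin y cands; rewrite mem_filter => /andP[cj _] jmin.
have {}jmin j' : down_cand y E n j' -> y j <= y j'.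
  by move=> cj'; apply: jmin; rewrite mem_filter cj' mem_iota1 (andP cj').1.
have yj : y j < 0 by have := jmin _ cj0; lia.
have [P run] := IH _ _ (leq_trans (potential_down cj) pot) (alg_inv_down I nz cj jmin yj).
by exists P; apply: A_down run.
Qed.

Section Stop.

Variables (y : nat -> int) (E : mgraph).
Hypotheses (I : alg_inv y E) (all_processed : forall k, in_n n k -> y k < 0).

Let P := E ++ stop_edges n E.

Lemma mem_stop_graph c u v : c != EDownish -> ((c, u, v) \in P) = ((c, u, v) \in E).
Proof. by move=> cD; rewrite mem_cat mem_stop_edges (negbTE cD) orbF. Qed.

Lemma mem_stop_graph_downish u v :
  ((EDownish, u, v) \in P) = ((EDownish, u, v) \in stop_edges n E).
Proof. by rewrite mem_cat; case: (boolP (_ \in E)) => // /(inv_edge I)[]. Qed.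

Lemma unjoined_later a b : (1 <= a)%N -> (a < b)%N -> (b <= n)%N -> njoin E a b = 0%N ->
  y b < y a.
Proof.
move=> a1 ab bn join0.
have [an bn'] : in_n n a /\ in_n n b by split; apply/andP; split; lia.
have := inv_time_inj I an bn' (negbT (ltn_eqF ab)) (all_processed an) (all_processed bn').
rewrite lt_neqAle eq_sym => -> /=; rewrite leNgt; apply/negP => yab.
suff : (0 < njoin E a b)%N by rewrite join0.
by apply: njoin_gt0 (inv_up_complete I an bn' ab _); rewrite /earlier all_processed.
Qed.

Lemma arc_stop_lt u v : Defs.arc P u v -> y u < y v.
Proof.
case/or3P; last first.
  rewrite mem_stop_graph_downish mem_stop_edges => /and5P[_ v1 vu un /eqP].
  exact: unjoined_later.
all: by rewrite mem_stop_graph // => /(inv_edge I)[_ _ _ /orP[] /andP[] // _ /andP[]].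
Qed.

Lemma has_down_kind_stop u v : has_kind P EDown u v -> y u < y v -> (EDown, v, u) \in E.
Proof.
rewrite /has_kind mem_stop_graph // => e yuv.
have [_ _ _ /orP[] /andP[] // _ /andP[_ ylt]] := inv_edge I e.
case: (leqP u v) => uv; first by move: ylt; rewrite (minn_idPl uv) (maxn_idPr uv); lia.
by move: e; rewrite (minn_idPr (ltnW uv)) (maxn_idPl (ltnW uv)).
Qed.

Lemma stop_njoin j k : (1 <= j)%N -> (j < k)%N -> (k <= n)%N -> njoin P j k = 1%N.
Proof.
move=> j1 jk kn; rewrite njoin_cat njoin_stop_edges //.
suff : (njoin E j k <= 1)%N by case: (njoin E j k) => [|[]].
apply: count_uniq_le1 (inv_uniq I) _ => -[[c1 a1] b1] [[c2 a2] b2] e1 e2 /=.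
move=> /andP[/eqP ea1 /eqP eb1] /andP[/eqP ea2 /eqP eb2]; subst.
have [_ _ _] := inv_edge I e1; have [_ _ _] := inv_edge I e2; rewrite /earlier.
by case/orP=> /and3P[/eqP-> _ ?] /orP[] /and3P[/eqP-> _ ?] //; lia.
Qed.

Lemma stop_acyclic u p : path (Defs.arc P) u p -> last u p = u -> p = [::].
Proof.
case: p => // a p /(sub_path arc_stop_lt) walk back; exfalso.
have ytrans : transitive (fun u v => y u < y v) by move=> ? ? ?; apply: lt_trans.
have /allP/(_ (last a p) (mem_last a p)) := order_path_min ytrans walk.
by rewrite /= -[in X in X -> _]back ltxx.
Qed.

Lemma stop_triangle a b c : Defs.arc P a b -> Defs.arc P b c ->
  [|| has_kind P EDown a b, has_kind P EDown b c | has_kind P EDown a c] ->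
  ~~ has_kind P EDownish a c.
Proof.
move=> /arc_stop_lt yab /arc_stop_lt ybc down3; apply/negP.
rewrite /has_kind mem_stop_graph_downish mem_stop_edges => /and5P[_ m1 mM Mn /eqP join0].
have ca : (c < a)%N.
  rewrite ltnNge; apply/negP => ac; move: (unjoined_later m1 mM Mn join0).
  by rewrite (minn_idPl ac) (maxn_idPr ac); lia.
rewrite (minn_idPr (ltnW ca)) (maxn_idPl (ltnW ca)) in m1 Mn join0.
have [cn an] : in_n n c /\ in_n n a by split; apply/andP; split; lia.
suff : (EDown, c, a) \in E by move/njoin_gt0; lia.
case/or3P: down3 => [/has_down_kind_stop/(_ yab) e|/has_down_kind_stop/(_ ybc) e|].
- by apply: (inv_down_nonearlier I e cn ca); rewrite /earlier negb_and; lia.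
- by apply: (inv_down_earlier I e an) => //; rewrite /earlier (all_processed an); lia.
- by rewrite /has_kind (minn_idPr (ltnW ca)) (maxn_idPl (ltnW ca)) mem_stop_graph.
Qed.

Lemma stop_parking_graph : parking_graph n P.
Proof.
split; [|split; [exact: stop_njoin|split; [exact: stop_acyclic|]]].
  move=> [[c a] b]; rewrite mem_cat => /orP[/(inv_edge I)[] //|].
  by rewrite mem_stop_edges => /and5P[].
by move=> a b c ab bc _ down3 _; apply: stop_triangle ab bc down3.
Qed.

Lemma stop_indeg i : in_n n i -> indeg P i = (xi x i - 1)%N.
Proof.
move=> iN; rewrite indeg_cat indeg_stop_edges addn0.
have := inv_indeg I iN; have := xi_pos iN; have := all_processed iN.
by case: ifP; lia.
Qed.

End Stop.

Lemma alg_run_correct y E P : algA_run n y E P -> alg_inv y E ->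
  parking_graph n P /\ (forall i, in_n n i -> indeg P i = (xi x i - 1)%N).
Proof.
elim=> {y E P} [y E j P jn yj jmax _ IH I|y E j P nz pos cj jmin _ IH I|y E neg I].
- exact/IH/alg_inv_up.
- apply/IH/alg_inv_down => //; have [j0 cj0 yj0] := down_step_from_processed I nz pos.
  by have := jmin j0 cj0; lia.
- by split; [exact: stop_parking_graph I neg | exact: stop_indeg I neg].
Qed.

End Invariant.

Theorem mainTheorem8 (x : seq nat) :
  parking_function x ->
  (exists P, algA x P) /\
  (forall P, algA x P ->
     parking_graph (size x) P /\
     (forall i, (1 <= i <= size x)%N -> indeg P i = (xi x i - 1)%N)).
Proof.
move=> x_park; have I := alg_inv_init x_park (erefl (size x)).
split; first exact: alg_run_exists (ltnSn _) I.
by move=> P run; apply: alg_run_correct run I.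
Qed.
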